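(* Let $\mathcal{X},\mathcal{Y}$ be finite sets and $p(X,Y)$ a distribution on $\mathcal{X}\times\mathcal{Y}$ with fully supported marginals. If $q\in C(\mathcal{X}\times\mathcal{Y},\mathcal{T})$ solves the IIB problem with parameter $\lambda=D(p(X,Y)\|p(X)p(Y))$, then for all $(x,y)\in\mathcal{S}$ and $t\in\mathcal{T}$, $$q(t|x,y)=\sum_{j=1}^n q(t|\mathcal{T}^q_j)\,\delta_{(x,y)\in\mathcal{S}_j}.$$
   Context: $\mathcal{T}:=\mathbb{N}$; $C(\mathcal{A},\mathcal{B})$ is the set of channels from $\mathcal{A}$ to $\mathcal{B}$. For $\kappa\in C(\mathcal{X}\times\mathcal{Y},\mathcal{T})$ and a distribution $r$ on $\mathcal{X}\times\mathcal{Y}$, $\kappa(r)(t)=\sum_{x,y}\kappa(t|x,y)r(x,y)$; $I_\kappa(X,Y;T)$ is the mutual information under $p(x,y)\kappa(t|x,y)$; $D$ is KL divergence. IIB problem with parameter $\lambda$: minimise $I_\kappa(X,Y;T)$ over $\kappa\in C(\mathcal{X}\times\mathcal{Y},\mathcal{T})$ subject to $D(\kappa(p(X,Y))\|\kappa(p(X)p(Y)))=\lambda$. $q(t)=\sum_{x,y}p(x,y)q(t|x,y)$, $q(A)=\sum_{t\in A}q(t)$, $q(t|A)=\frac{q(t)}{q(A)}\delta_{t\in A}$. $\mathcal{S}=\operatorname{supp}p(X,Y)$; $(x,y)\sim(x',y')$ iff $\frac{p(x,y)}{p(x)p(y)}=\frac{p(x',y')}{p(x')p(y')}$, whose classes contained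 in $\mathcal{S}$ are $\mathcal{S}_1,\dots,\mathcal{S}_n$. $\mathcal{T}^q_j:=\{t\in\mathcal{T}:\exists(x,y)\in\mathcal{S}_j,\ q(t|x,y)>0\}$. *)

From HB Require Import structures.
From mathcomp Require Import all_boot all_order all_algebra.
From mathcomp Require Import all_classical all_reals.
From mathcomp Require Import all_analysis.
Set Implicit Arguments. Unset Strict Implicit. Unset Printing Implicit Defensive.
Import Order.TTheory GRing.Theory Num.Theory.
Local Open Scope classical_set_scope.
Local Open Scope ring_scope.

Section IIB.
Variables (R : realType) (X Y : finType).

Definition is_distr (p : X * Y -> R) : Prop :=
  (forall z, 0 <= p z) /\ \sum_(z : X * Y) p z = 1.

Definition margX (p : X * Y -> R) (x : X) : R := \sum_(y : Y) p (x, y).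
Definition margY (p : X * Y -> R) (y : Y) : R := \sum_(x : X) p (x, y).
Definition prodmarg (p : X * Y -> R) (z : X * Y) : R := margX p z.1 * margY p z.2.

(* channels from X * Y to T := nat : kappa z t = kappa(t|z) *)
Definition is_channel (k : X * Y -> nat -> R) : Prop :=
  (forall z t, 0 <= k z t) /\ (forall z, (\sum_(t <oo) (k z t)%:E)%E = 1%E).

Definition chan_out (k : X * Y -> nat -> R) (r : X * Y -> R) (t : nat) : R :=
  \sum_(z : X * Y) k z t * r z.

Definition kl_term (a b : R) : \bar R :=
  if a == 0 then 0%E else if b == 0 then +oo%E else (a * ln (a / b))%:E.

Definition epos (e : \bar R) : \bar R := maxe e 0%E.
Definition eneg (e : \bar R) : \bar R := maxe (- e)%E 0%E.

Definition KLfin (P Q : X * Y -> R) : \bar R :=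
  (\sum_(z : X * Y) kl_term (P z) (Q z))%E.

(* KL divergence of two distributions on T = nat: integral of the integrand
   w.r.t. counting measure = (sum of positive parts) - (sum of negative parts) *)
Definition KLnat (P Q : nat -> R) : \bar R :=
  ((\sum_(t <oo) epos (kl_term (P t) (Q t)))
   - (\sum_(t <oo) eneg (kl_term (P t) (Q t))))%E.

Definition KLprod (P Q : X * Y -> nat -> R) : \bar R :=
  ((\sum_(t <oo) \sum_(z : X * Y) epos (kl_term (P z t) (Q z t)))
   - (\sum_(t <oo) \sum_(z : X * Y) eneg (kl_term (P z t) (Q z t))))%E.

Definition MI (p : X * Y -> R) (k : X * Y -> nat -> R) : \bar R :=
  KLprod (fun z t => p z * k z t) (fun z t => p z * chan_out k p t).

Definition IIB_constraint (p : X * Y -> R) (k : X * Y -> nat -> R) : \bar R :=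
  KLnat (chan_out k p) (chan_out k (prodmarg p)).

Definition IIB_solution (p : X * Y -> R) (lambda : \bar R)
    (q : X * Y -> nat -> R) : Prop :=
  [/\ is_channel q, IIB_constraint p q = lambda &
      forall k, is_channel k -> IIB_constraint p k = lambda ->
        (MI p q <= MI p k)%E].

Definition supp (p : X * Y -> R) : {set X * Y} := [set z | p z != 0].

Definition pmi_ratio (p : X * Y -> R) (z : X * Y) : R := p z / prodmarg p z.

Definition eq_class (p : X * Y -> R) (z : X * Y) : {set X * Y} :=
  [set z' | pmi_ratio p z' == pmi_ratio p z].

Definition classes_in_S (p : X * Y -> R) : {set {set X * Y}} :=
  [set C in [set eq_class p z | z in [set: X * Y]] | C \subset supp p].

Definition qT (p : X * Y -> R) (q : X * Y -> nat -> R) (t : nat) : R :=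
  \sum_(z : X * Y) p z * q z t.

Definition qmass (p : X * Y -> R) (q : X * Y -> nat -> R) (A : set nat) : R :=
  fine (\sum_(t <oo) ((qT p q t) * \1_A t)%:E)%E.

Definition qcond (p : X * Y -> R) (q : X * Y -> nat -> R) (A : set nat)
    (t : nat) : R :=
  qT p q t / qmass p q A * \1_A t.

Definition Tq (q : X * Y -> nat -> R) (C : {set X * Y}) : set nat :=
  [set t | exists2 z, z \in C & 0 < q z t].

End IIB.

From HB Require Import structures.
From mathcomp Require Import all_boot all_order all_algebra.
From mathcomp Require Import all_classical all_reals.
From mathcomp Require Import all_analysis.
From mathcomp Require Import ring lra.
Import Order.TTheory GRing.Theory Num.Theory.
Set Implicit Arguments. Unset Strict Implicit. Unset Printing Implicit Defensive.
Local Open Scope ring_scope.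

(* Let [qbar] be the channel that averages [q(.|z)] over the class of [z],
   with weights [p]. The ratio [p(x,y) / p(x)p(y)] is constant on a class, so
   [qbar] has the same output distributions as [q] under both [p(X,Y)] and
   [p(X)p(Y)], and hence also satisfies the constraint. By strict convexity of
   [a ln (a / b)], averaging lowers the mutual information unless [qbar = q] on
   the support, so optimality of [q] forces [q = qbar] there.
   The constraint with [lambda = D(p(X,Y) || p(X)p(Y))] is the equality case of
   the data-processing inequality; through the log-sum inequality it forces all
   inputs that can emit a given [t] into a single class, which identifies
   [qbar(t|z)] with [q(t | T^q_j)].
   Mutual information and the constraint are differences of two series of
   nonnegative terms, so each termwise comparison also needs the finiteness of
   the series involved. *)

Section KLReal.
Variable R : realType.

Definition klr (a b : R) : R := a * ln (a / b).

Lemma klr0 (b : R) : klr 0 b = 0.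
Proof. by rewrite /klr mul0r. Qed.

Lemma klrM2l (c a b : R) : klr (c * a) (c * b) = c * klr a b.
Proof.
rewrite /klr; have [->|c0] := eqVneq c 0; first by rewrite !mul0r.
by rewrite -mulf_div divff // mul1r mulrA.
Qed.

Lemma klr_split (a b c : R) : 0 <= a -> 0 < b -> 0 < c ->
  klr a b = klr a c + a * ln (c / b).
Proof.
rewrite le_eqVlt => /predU1P[<-|a0] b0 c0; first by rewrite !klr0 mul0r addr0.
by rewrite /klr !ln_div ?posrE ?divr_gt0 //; ring.
Qed.

Lemma ln_lt_subr1 (x : R) : 0 < x -> x != 1 -> ln x < x - 1.
Proof.
move=> x0 x1; have := @expR_gt1Dx R (ln x).
rewrite lnK ?posrE // ln_eq0 // => /(_ x1) ?; lra.
Qed.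

Lemma sub_lt_klr (a b : R) : 0 < a -> 0 < b -> a != b -> a - b < klr a b.
Proof.
move=> a0 b0 ab; have ba : b / a != 1.
  by apply: contraNneq ab => ba1; apply/eqP; rewrite -[RHS](divfK (lt0r_neq0 a0)) ba1 mul1r.
have lt := ln_lt_subr1 (divr_gt0 b0 a0) ba.
have lnab : ln (a / b) = - ln (b / a) by rewrite -lnV ?posrE ?divr_gt0 // invf_div.
have : a * ln (b / a) < a * (b / a - 1) by rewrite ltr_pM2l.
rewrite /klr lnab mulrBr mulrCA divff ?gt_eqF // !mulr1 => ?; lra.
Qed.

Lemma sub_le_klr (a b : R) : 0 <= a -> 0 <= b -> (b = 0 -> a = 0) ->
  a - b <= klr a b /\ (klr a b = a - b -> a = b).
Proof.
move=> a0 b0 ba; have [bz|bn] := eqVneq b 0; first by rewrite bz (ba bz) klr0 subrr.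
have bp : 0 < b by rewrite lt_def bn.
have [az|an] := eqVneq a 0.
  rewrite az klr0 sub0r oppr_le0 b0; split=> // /eqP.
  by rewrite eq_sym oppr_eq0 (negPf bn).
have ap : 0 < a by rewrite lt_def an.
have [->|ab] := eqVneq a b; first by rewrite /klr divff ?gt_eqF // ln1 mulr0 subrr.
have lt := sub_lt_klr ap bp ab.
by split=> [|eq]; [exact: ltW | move: lt; rewrite eq ltxx].
Qed.

Section LogSum.
Variables (I : finType) (a b : I -> R).
Hypotheses (a_ge0 : forall i, 0 <= a i) (b_ge0 : forall i, 0 <= b i).
Hypothesis b0_a0 : forall i, b i = 0 -> a i = 0.

Let A := \sum_i a i.
Let B := \sum_i b i.

Lemma log_sum_denom_gt0 : 0 < A -> 0 < B.
Proof.
move=> A0; rewrite lt_def sumr_ge0 // andbT; apply: contraTneq A0 => /psumr_eq0P B0.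
by rewrite /A big1 ?ltxx // => i _; apply/b0_a0/B0.
Qed.

Lemma log_sum_gapE : 0 < A ->
  \sum_i klr (a i) (b i) - klr A B =
  \sum_i (klr (a i) (A / B * b i) - (a i - A / B * b i)).
Proof.
move=> A0; have B0 := log_sum_denom_gt0 A0.
have split_i i : klr (a i) (b i) = klr (a i) (A / B * b i) + a i * ln (A / B).
  have [bi0|bi0] := eqVneq (b i) 0; first by rewrite b0_a0 // !klr0 mul0r addr0.
  have bp : 0 < b i by rewrite lt_def bi0 b_ge0.
  have cbp : 0 < A / B * b i by rewrite !mulr_gt0 ?invr_gt0.
  by rewrite (klr_split (a_ge0 i) bp cbp) mulfK.
have lin : \sum_i (a i - A / B * b i) = 0.
  by rewrite sumrB -mulr_sumr -/A -/B divfK ?gt_eqF // subrr.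
rewrite sumrB lin subr0 (eq_bigr _ (fun i _ => split_i i)) big_split /=.
by rewrite -mulr_suml -/A {3}/klr addrK.
Qed.

Lemma log_sum_le : klr A B <= \sum_i klr (a i) (b i) /\
  (klr A B = \sum_i klr (a i) (b i) -> forall i, a i * B = A * b i).
Proof.
have [A0|An] := eqVneq A 0.
  have a0 i : a i = 0 by apply: (psumr_eq0P (fun i _ => a_ge0 i) A0).
  split=> [|_ i]; last by rewrite a0 A0 !mul0r.
  by rewrite A0 klr0 sumr_ge0 // => i _; rewrite a0 klr0.
have Ap : 0 < A by rewrite lt_def An sumr_ge0.
have c0 : 0 < A / B by rewrite divr_gt0 ?log_sum_denom_gt0.
have cb0_a0 i : A / B * b i = 0 -> a i = 0.
  by move/eqP; rewrite mulf_eq0 (negPf (lt0r_neq0 c0)) => /eqP/b0_a0.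
have term i := sub_le_klr (a_ge0 i) (mulr_ge0 (ltW c0) (b_ge0 i)) (cb0_a0 i).
have term_ge0 i : 0 <= klr (a i) (A / B * b i) - (a i - A / B * b i).
  by rewrite subr_ge0; case: (term i).
split; first by rewrite -subr_ge0 log_sum_gapE // sumr_ge0.
move=> eq i; have gap0 : \sum_i (klr (a i) (A / B * b i) - (a i - A / B * b i)) = 0.
  by rewrite -log_sum_gapE // eq subrr.
have -> : a i = A / B * b i.
  apply: (term i).2; apply/eqP; rewrite -subr_eq0; apply/eqP.
  exact: (psumr_eq0P (fun i _ => term_ge0 i) gap0).
by rewrite mulrAC divfK ?gt_eqF ?log_sum_denom_gt0.
Qed.
End LogSum.

End KLReal.

Section NNSeries.
Variable R : realType.
Local Open Scope ereal_scope.

Lemma nneseries_fin (f : nat -> R) : (forall t, 0 <= f t)%R ->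
  \sum_(t <oo) (f t)%:E < +oo -> exists r, \sum_(t <oo) (f t)%:E = r%:E.
Proof.
move=> f0 lt; exists (fine (\sum_(t <oo) (f t)%:E)).
by rewrite fineK // ge0_fin_numE // nneseries_ge0 // => t _ _; rewrite lee_fin.
Qed.

Lemma nneseries_term_le (f : nat -> R) t : (forall t, 0 <= f t)%R ->
  (f t)%:E <= \sum_(t <oo) (f t)%:E.
Proof.
move=> f0; rewrite (@nneseriesD1 _ _ t xpredT) // => [|k _]; last by rewrite lee_fin.
by rewrite leeDl // nneseries_ge0 // => k _ _; rewrite lee_fin.
Qed.

Lemma nneseriesD_EFin (f g : nat -> R) : (forall t, 0 <= f t)%R ->
  (forall t, 0 <= g t)%R ->
  \sum_(t <oo) (f t + g t)%:E = \sum_(t <oo) (f t)%:E + \sum_(t <oo) (g t)%:E.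
Proof. by move=> f0 g0; rewrite -nneseriesD // => t _ _; rewrite lee_fin. Qed.

Lemma nneseries_le_lt (f g : nat -> R) : (forall t, 0 <= f t)%R ->
  (forall t, f t <= g t)%R -> \sum_(t <oo) (g t)%:E < +oo ->
  \sum_(t <oo) (f t)%:E < +oo.
Proof.
by move=> f0 fg; apply: le_lt_trans; apply: lee_nneseries => t *; rewrite lee_fin.
Qed.

Lemma nneseries_mixture (I : finType) (k : I -> nat -> R) (c : I -> R) :
  (forall i t, 0 <= k i t)%R -> (forall i, \sum_(t <oo) (k i t)%:E = 1) ->
  (forall i, 0 <= c i)%R ->
  \sum_(t <oo) (\sum_i c i * k i t)%:E = (\sum_i c i)%:E.
Proof.
move=> k0 k1 c0; under eq_eseriesr do rewrite -sumEFin.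
rewrite nneseries_sum => [|i t _]; last by rewrite lee_fin mulr_ge0.
rewrite -sumEFin; apply: eq_bigr => i _; under eq_eseriesr do rewrite EFinM.
by rewrite nneseriesZl ?k1 ?mule1 // => t _; rewrite lee_fin.
Qed.

Lemma nneseriesB_fin (f g : nat -> R) : (forall t, 0 <= f t)%R ->
  (forall t, 0 <= g t)%R ->
  \sum_(t <oo) (f t)%:E - \sum_(t <oo) (g t)%:E \is a fin_num ->
  \sum_(t <oo) (f t)%:E < +oo /\ \sum_(t <oo) (g t)%:E < +oo.
Proof.
move=> f0 g0; rewrite fin_numB !ge0_fin_numE => [/andP//|*|*];
  by apply: nneseries_ge0 => *; rewrite lee_fin.
Qed.

Lemma termwise_eq_of_nneseriesB_le (a b c d : nat -> R) :
  (forall t, 0 <= a t)%R -> (forall t, 0 <= b t)%R ->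
  (forall t, 0 <= c t)%R -> (forall t, 0 <= d t)%R ->
  (forall t, c t - d t <= a t - b t)%R ->
  \sum_(t <oo) (b t)%:E < +oo -> \sum_(t <oo) (c t)%:E < +oo ->
  \sum_(t <oo) (d t)%:E < +oo ->
  \sum_(t <oo) (a t)%:E - \sum_(t <oo) (b t)%:E <=
    \sum_(t <oo) (c t)%:E - \sum_(t <oo) (d t)%:E ->
  forall t, (c t - d t = a t - b t)%R.
Proof.
move=> a0 b0 c0 d0 cd_le_ab /(nneseries_fin b0)[sb Eb] /(nneseries_fin c0)[sc Ec].
move=> /(nneseries_fin d0)[sd Ed]; rewrite Eb Ec Ed -EFinB leeBlDr // -EFinD => le_sum.
pose w t := (a t - b t - (c t - d t))%R.
have w0 t : (0 <= w t)%R by rewrite subr_ge0.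
have sum_ad : \sum_(t <oo) (a t)%:E + sd%:E = \sum_(t <oo) (w t)%:E + (sb + sc)%:E.
  have bc0 t : (0 <= b t + c t)%R by rewrite addr_ge0.
  rewrite -Ed EFinD -Eb -Ec -!nneseriesD_EFin //.
  by apply: eq_eseriesr => t _; rewrite /w; congr (_%:E); ring.
have w_le0 : \sum_(t <oo) (w t)%:E <= 0.
  rewrite -(@leeD2rE _ (sb + sc)%:E) // add0e -sum_ad.
  by apply: le_trans (leeD2r _ le_sum) _; rewrite -EFinD lee_fin; lra.
move=> t; have := le_trans (nneseries_term_le t w0) w_le0; rewrite lee_fin.
by have := w0 t; rewrite /w; lra.
Qed.

End NNSeries.

Section KLExpansion.
Variable R : realType.

Definition pospart (x : R) : R := Num.max x 0.
Definition negpart (x : R) : R := Num.max (- x) 0.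

Lemma pospart_ge0 (x : R) : 0 <= pospart x.
Proof. by rewrite le_max lexx orbT. Qed.

Lemma negpart_ge0 (x : R) : 0 <= negpart x.
Proof. by rewrite le_max lexx orbT. Qed.

Lemma pospartB (x : R) : pospart x - negpart x = x.
Proof.
rewrite /pospart /negpart /Order.max /=.
by case: (ltP x 0); case: (ltP (- x) 0) => /= *; lra.
Qed.

Lemma negpart_klr_le (a b : R) : 0 <= a -> 0 <= b -> (b = 0 -> a = 0) ->
  negpart (klr a b) <= b.
Proof.
move=> a0 b0 ba; rewrite ge_max b0 andbT.
by have [+ _] := sub_le_klr a0 b0 ba; lra.
Qed.

Lemma kl_termE (a b : R) : (b = 0 -> a = 0) -> kl_term a b = (klr a b)%:E.
Proof.
rewrite /kl_term; have [->|an] := eqVneq a 0; first by rewrite klr0.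
by have [/[swap]/[apply]/eqP|//] := eqVneq b 0; rewrite (negPf an).
Qed.

Lemma epos_EFin (x : R) : epos x%:E = (pospart x)%:E.
Proof. by rewrite /epos EFin_max. Qed.

Lemma eneg_EFin (x : R) : eneg x%:E = (negpart x)%:E.
Proof. by rewrite /eneg EFin_max. Qed.

Local Open Scope ereal_scope.

Lemma KLfinE (X Y : finType) (P Q : X * Y -> R) : (forall z, Q z != 0%R) ->
  KLfin P Q = (\sum_z klr (P z) (Q z))%:E.
Proof.
move=> Q0; rewrite /KLfin -sumEFin; apply: eq_bigr => z _.
by rewrite kl_termE // => /eqP; rewrite (negPf (Q0 z)).
Qed.

Lemma KLnatE (P Q : nat -> R) : (forall t, Q t = 0 -> P t = 0)%R ->
  KLnat P Q = \sum_(t <oo) (pospart (klr (P t) (Q t)))%:E -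
              \sum_(t <oo) (negpart (klr (P t) (Q t)))%:E.
Proof.
move=> QP; rewrite /KLnat.
by congr (_ - _); apply: eq_eseriesr => t _; rewrite (kl_termE (QP t)) ?epos_EFin ?eneg_EFin.
Qed.

Lemma KLprodE (X Y : finType) (P Q : X * Y -> nat -> R) :
  (forall z t, Q z t = 0 -> P z t = 0)%R ->
  KLprod P Q = \sum_(t <oo) (\sum_z pospart (klr (P z t) (Q z t)))%:E -
               \sum_(t <oo) (\sum_z negpart (klr (P z t) (Q z t)))%:E.
Proof.
move=> QP; rewrite /KLprod; congr (_ - _); apply: eq_eseriesr => t _;
  rewrite -sumEFin; apply: eq_bigr => z _;
  by rewrite (kl_termE (QP z t)) ?epos_EFin ?eneg_EFin.
Qed.

End KLExpansion.

Section IIB.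
Variables (R : realType) (X Y : finType) (p : X * Y -> R) (q : X * Y -> nat -> R).
Hypotheses (p_distr : is_distr p) (margX_gt0 : forall x, 0 < margX p x).
Hypotheses (margY_gt0 : forall y, 0 < margY p y) (q_chan : is_channel q).

Local Notation m := (prodmarg p).
Local Notation P := (chan_out q p).
Local Notation Q := (chan_out q m).

Lemma p_ge0 z : 0 <= p z. Proof. by case: p_distr. Qed.
Lemma p_sum1 : \sum_z p z = 1. Proof. by case: p_distr. Qed.
Lemma q_ge0 z t : 0 <= q z t. Proof. by case: q_chan. Qed.
Lemma q_sum1 z : (\sum_(t <oo) (q z t)%:E)%E = 1%E. Proof. by case: q_chan. Qed.

Lemma prodmarg_gt0 z : 0 < m z.
Proof. exact: mulr_gt0. Qed.

Lemma le_chan_out (r : X * Y -> R) z t : (forall z, 0 <= r z) ->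
  q z t * r z <= chan_out q r t.
Proof.
by move=> r0; rewrite /chan_out (bigD1 z) //= lerDl sumr_ge0 // => *; rewrite mulr_ge0 ?q_ge0.
Qed.

Lemma chan_out_ge0 (r : X * Y -> R) t : (forall z, 0 <= r z) -> 0 <= chan_out q r t.
Proof. by move=> r0; rewrite sumr_ge0 // => z _; rewrite mulr_ge0 ?q_ge0. Qed.

Lemma chan_out_eq0 (r : X * Y -> R) z t : (forall z, 0 <= r z) ->
  chan_out q r t = 0 -> q z t * r z = 0.
Proof.
move=> r0 /eqP; rewrite eq_le => /andP[le _].
by apply/eqP; rewrite eq_le (le_trans (le_chan_out _ _ r0)) // mulr_ge0 ?q_ge0.
Qed.

Lemma chan_out_prodmarg_eq0 t : Q t = 0 -> P t = 0.
Proof.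
move=> Q0; apply: big1 => z _.
have /eqP := chan_out_eq0 z (fun y => ltW (prodmarg_gt0 y)) Q0.
by rewrite mulf_eq0 (gt_eqF (prodmarg_gt0 z)) orbF => /eqP ->; rewrite mul0r.
Qed.

Lemma pmi_ratio_eq0 z : (pmi_ratio p z == 0) = (p z == 0).
Proof. by rewrite mulf_eq0 invr_eq0 (gt_eqF (prodmarg_gt0 z)) orbF. Qed.

Lemma eq_class_refl z : z \in eq_class p z.
Proof. by rewrite inE. Qed.

Lemma eq_class_sym z z' : (z' \in eq_class p z) = (z \in eq_class p z').
Proof. by rewrite !inE eq_sym. Qed.

Lemma eq_class_eq z z' : z' \in eq_class p z -> eq_class p z' = eq_class p z.
Proof. by rewrite inE => /eqP zz'; apply/setP => y; rewrite !inE zz'. Qed.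

Lemma eq_class_supp z z' : p z != 0 -> z' \in eq_class p z -> p z' != 0.
Proof. by rewrite inE -!pmi_ratio_eq0 => + /eqP ->. Qed.

Definition cmass z := \sum_(z' in eq_class p z) p z'.
Definition cjoint z t := \sum_(z' in eq_class p z) p z' * q z' t.

(* Off the support the class average is meaningless; keeping [q] there makes
   [qbar] a channel. *)
Definition qbar z t := if p z == 0 then q z t else cjoint z t / cmass z.

Lemma cmass_ge z : p z <= cmass z.
Proof. by rewrite /cmass (bigD1 z) ?eq_class_refl //= lerDl sumr_ge0 // => *; exact: p_ge0. Qed.

Lemma cmass_gt0 z : p z != 0 -> 0 < cmass z.
Proof. by move=> pz; apply: lt_le_trans (cmass_ge z); rewrite lt_def pz p_ge0. Qed.

Lemma cmass_eq_class z z' : z' \in eq_class p z -> cmass z' = cmass z.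
Proof. by rewrite /cmass => /eq_class_eq ->. Qed.

Lemma cjoint_ge0 z t : 0 <= cjoint z t.
Proof. by rewrite sumr_ge0 // => *; rewrite mulr_ge0 ?p_ge0 ?q_ge0. Qed.

Lemma cjoint_le z t : cjoint z t <= P t.
Proof.
rewrite /cjoint big_mkcond /=; apply: ler_sum => z' _.
by case: ifP => _; [rewrite mulrC | rewrite mulr_ge0 ?p_ge0 ?q_ge0].
Qed.

Lemma qbar_ge0 z t : 0 <= qbar z t.
Proof.
by rewrite /qbar; case: ifP => [_|/negbT pz]; rewrite ?q_ge0 ?divr_ge0 ?cjoint_ge0 ?ltW ?cmass_gt0.
Qed.

Lemma qbar_eq_class z z' t : p z != 0 -> z' \in eq_class p z -> qbar z' t = qbar z t.
Proof.
move=> pz zz'; rewrite /qbar (negPf pz) (negPf (eq_class_supp pz zz')).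
by rewrite (cmass_eq_class zz') /cjoint (eq_class_eq zz').
Qed.

Lemma sum_eq_class z : \sum_z' (z' \in eq_class p z)%:R * p z' = cmass z.
Proof.
by rewrite /cmass [RHS]big_mkcond; apply: eq_bigr => z' _; case: ifP; rewrite ?mul1r ?mul0r.
Qed.

Lemma qbarE z t : p z != 0 ->
  qbar z t = \sum_z' ((z' \in eq_class p z)%:R * p z' / cmass z) * q z' t.
Proof.
move=> pz; rewrite /qbar (negPf pz) /cjoint big_mkcond mulr_suml; apply: eq_bigr => z' _.
by case: ifP; rewrite ?mul1r ?mul0r // mulrAC.
Qed.

Lemma qbar_channel : is_channel qbar.
Proof.
split=> [|z]; first exact: qbar_ge0.
have [pz|pz] := eqVneq (p z) 0; first by rewrite /qbar pz eqxx; exact: q_sum1.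
under eq_eseriesr do rewrite qbarE //.
rewrite nneseries_mixture => [||z'|z']; last by rewrite divr_ge0 ?mulr_ge0 ?p_ge0 ?ler0n ?ltW ?cmass_gt0.
- by rewrite -mulr_suml sum_eq_class divff ?gt_eqF ?cmass_gt0.
- exact: q_ge0.
- exact: q_sum1.
Qed.

Lemma sum_qbar_invariant t (w : X * Y -> R) :
  (forall z z', p z != 0 -> z' \in eq_class p z -> w z' = w z) ->
  \sum_z p z * qbar z t * w z = \sum_z p z * q z t * w z.
Proof.
move=> w_inv.
(* Expand [qbar], exchange the two sums and use that [cmass] is constant on
   classes, so that the weights [p z / cmass z] of each class sum to one. *)
have lhsE z : p z * qbar z t * w z =
    \sum_z' (z' \in eq_class p z)%:R * p z / cmass z * (p z' * q z' t * w z').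
  have [->|pz] := eqVneq (p z) 0; first by rewrite !mul0r big1 // => *; rewrite mulr0 !mul0r.
  rewrite qbarE // mulr_sumr mulr_suml; apply: eq_bigr => z' _.
  case: (boolP (z' \in eq_class p z)) => [zz'|_]; last by rewrite !(mul0r, mulr0).
  by rewrite (w_inv _ _ pz zz') !mul1r; field; rewrite gt_eqF ?cmass_gt0.
rewrite (eq_bigr _ (fun z _ => lhsE z)) exchange_big /=; apply: eq_bigr => z' _.
have [->|pz'] := eqVneq (p z') 0; first by rewrite !mul0r big1 // => *; rewrite mulr0.
rewrite -mulr_suml -[RHS]mul1r; congr (_ * _).
have e z : (z' \in eq_class p z)%:R * p z / cmass z =
           (z \in eq_class p z')%:R * p z / cmass z'.
  rewrite eq_class_sym; case: (boolP (z \in eq_class p z')) => [/cmass_eq_class -> //|_].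
  by rewrite !mul0r.
by rewrite (eq_bigr _ (fun z _ => e z)) -mulr_suml sum_eq_class divff ?gt_eqF ?cmass_gt0.
Qed.

Lemma chan_out_qbar t : chan_out qbar p t = P t.
Proof.
have e (k : X * Y -> nat -> R) : chan_out k p t = \sum_z p z * k z t * 1.
  by apply: eq_bigr => z _; rewrite mulr1 mulrC.
by rewrite !e sum_qbar_invariant.
Qed.

Lemma chan_out_qbar_prodmarg t : chan_out qbar m t = Q t.
Proof.
(* [m z / p z] is junk off the support; the second summand takes over there. *)
have split_m (k : X * Y -> nat -> R) z :
    k z t * m z = p z * k z t * (m z / p z) + (p z == 0)%:R * (k z t * m z).
  have [->|pz] := eqVneq (p z) 0; first by rewrite !mul0r add0r mul1r.
  by rewrite mul0r addr0; field.
rewrite /chan_out (eq_bigr _ (fun z _ => split_m qbar z)).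
rewrite (eq_bigr _ (fun z _ => split_m q z)) !big_split /=; congr (_ + _).
  apply: sum_qbar_invariant => z z' _; rewrite inE /pmi_ratio => /eqP eq.
  by rewrite -[m z' / _]invf_div -[m z / _]invf_div eq.
by apply: eq_bigr => z _; rewrite /qbar; case: eqP; rewrite ?mul0r.
Qed.

Lemma IIB_constraint_qbar : IIB_constraint p qbar = IIB_constraint p q.
Proof.
rewrite /IIB_constraint; congr KLnat; apply: funext => t.
  exact: chan_out_qbar.
exact: chan_out_qbar_prodmarg.
Qed.

Lemma klr_chan_out_le t :
  klr (P t) (Q t) <= \sum_z q z t * klr (p z) (m z) /\
  (klr (P t) (Q t) = \sum_z q z t * klr (p z) (m z) ->
     forall z, q z t * p z * Q t = P t * (q z t * m z)).
Proof.
have a0 z : 0 <= q z t * p z by rewrite mulr_ge0 ?q_ge0 ?p_ge0.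
have b0 z : 0 <= q z t * m z by rewrite mulr_ge0 ?q_ge0 ?ltW ?prodmarg_gt0.
have ba z : q z t * m z = 0 -> q z t * p z = 0.
  by move/eqP; rewrite mulf_eq0 (gt_eqF (prodmarg_gt0 z)) orbF => /eqP ->; rewrite mul0r.
by have := log_sum_le a0 b0 ba; rewrite (eq_bigr _ (fun z _ => klrM2l _ _ _)).
Qed.

Hypothesis q_constraint : IIB_constraint p q = KLfin p m.

(* Summed over [t], [klr_chan_out_le] bounds the constraint by [KLfin p m];
   the constraint says this bound is attained, hence attained termwise. *)
Lemma klr_chan_out_eq t : klr (P t) (Q t) = \sum_z q z t * klr (p z) (m z).
Proof.
pose a t := \sum_z pospart (klr (p z) (m z)) * q z t.
pose b t := \sum_z negpart (klr (p z) (m z)) * q z t.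
pose c t := pospart (klr (P t) (Q t)).
pose d t := negpart (klr (P t) (Q t)).
have abE s : a s - b s = \sum_z q z s * klr (p z) (m z).
  by rewrite -sumrB; apply: eq_bigr => z _; rewrite -mulrBl pospartB mulrC.
have cdE s : c s - d s = klr (P s) (Q s) by exact: pospartB.
have a0 s : 0 <= a s by rewrite sumr_ge0 // => *; rewrite mulr_ge0 ?q_ge0 ?pospart_ge0.
have b0 s : 0 <= b s by rewrite sumr_ge0 // => *; rewrite mulr_ge0 ?q_ge0 ?negpart_ge0.
have c0 s : 0 <= c s by exact: pospart_ge0.
have d0 s : 0 <= d s by exact: negpart_ge0.
have constrE : IIB_constraint p q = (\sum_(t <oo) (c t)%:E - \sum_(t <oo) (d t)%:E)%E.
  by rewrite /IIB_constraint KLnatE // => s; exact: chan_out_prodmarg_eq0.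
have finE : KLfin p m = (\sum_z klr (p z) (m z))%:E.
  by rewrite KLfinE // => z; rewrite gt_eqF ?prodmarg_gt0.
have sum_a : (\sum_(t <oo) (a t)%:E = (\sum_z pospart (klr (p z) (m z)))%:E)%E.
  by rewrite nneseries_mixture // => *; [exact: q_ge0 | exact: q_sum1 | exact: pospart_ge0].
have sum_b : (\sum_(t <oo) (b t)%:E = (\sum_z negpart (klr (p z) (m z)))%:E)%E.
  by rewrite nneseries_mixture // => *; [exact: q_ge0 | exact: q_sum1 | exact: negpart_ge0].
have [cfin dfin] : (\sum_(t <oo) (c t)%:E < +oo /\ \sum_(t <oo) (d t)%:E < +oo)%E.
  by apply: nneseriesB_fin => //; rewrite -constrE q_constraint finE.
have le_t s : c s - d s <= a s - b s by rewrite abE cdE; case: (klr_chan_out_le s).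
have le_sum : (\sum_(t <oo) (a t)%:E - \sum_(t <oo) (b t)%:E <=
               \sum_(t <oo) (c t)%:E - \sum_(t <oo) (d t)%:E)%E.
  rewrite sum_a sum_b -EFinB -sumrB -constrE q_constraint finE lee_fin.
  by under eq_bigr do rewrite pospartB.
have bfin : (\sum_(t <oo) (b t)%:E < +oo)%E by rewrite sum_b ltry.
by rewrite -abE -cdE (termwise_eq_of_nneseriesB_le a0 b0 c0 d0 le_t bfin cfin dfin le_sum).
Qed.

Lemma common_output_eq_class t z z' : 0 < q z t -> 0 < q z' t -> z' \in eq_class p z.
Proof.
have ratioE y : 0 < q y t -> pmi_ratio p y = P t / Q t.
  move=> qy; have Qp : 0 < Q t := lt_le_trans (mulr_gt0 qy (prodmarg_gt0 y))
    (le_chan_out y t (fun z => ltW (prodmarg_gt0 z))).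
  have e := (klr_chan_out_le t).2 (klr_chan_out_eq t) y.
  have e' : p y * Q t = P t * m y.
    by apply: (mulfI (lt0r_neq0 qy)); rewrite mulrA e mulrCA.
  rewrite /pmi_ratio -[p y](mulfK (lt0r_neq0 Qp)) e' mulrAC.
  by rewrite mulfK ?gt_eqF ?prodmarg_gt0.
by move=> /ratioE rz /ratioE rz'; rewrite inE rz rz'.
Qed.

Lemma qbar_eq0 z t : p z != 0 -> qbar z t = 0 -> q z t = 0.
Proof.
move=> pz; rewrite /qbar (negPf pz) => /eqP; rewrite mulf_eq0 invr_eq0.
rewrite (gt_eqF (cmass_gt0 pz)) orbF => /eqP cj0.
have /eqP := psumr_eq0P (fun z' _ => mulr_ge0 (p_ge0 z') (q_ge0 z' t)) cj0 (eq_class_refl z).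
by rewrite mulf_eq0 (negPf pz) => /eqP.
Qed.

Lemma chan_out_gt0_of_qbar z t : p z != 0 -> 0 < qbar z t -> 0 < P t.
Proof.
move=> pz; rewrite /qbar (negPf pz) => qb; apply: lt_le_trans (cjoint_le z t).
by move: qb; rewrite pmulr_lgt0 // invr_gt0 cmass_gt0.
Qed.

Lemma p_qbar_le z t : p z * qbar z t <= P t.
Proof.
have [->|pz] := eqVneq (p z) 0; first by rewrite mul0r chan_out_ge0 // => *; exact: p_ge0.
rewrite /qbar (negPf pz); apply: le_trans (cjoint_le z t).
apply: le_trans (ler_wpM2r _ (cmass_ge z)) _; first by rewrite divr_ge0 ?cjoint_ge0 ?ltW ?cmass_gt0.
by rewrite mulrCA divff ?mulr1 ?gt_eqF ?cmass_gt0.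
Qed.

Lemma mi_gapE t :
  \sum_z p z * klr (q z t) (P t) - \sum_z p z * klr (qbar z t) (P t) =
  \sum_z p z * (klr (q z t) (qbar z t) - (q z t - qbar z t)).
Proof.
have splitE z : p z * klr (q z t) (P t) =
    p z * klr (q z t) (qbar z t) + p z * q z t * ln (qbar z t / P t).
  have [->|pz] := eqVneq (p z) 0; first by rewrite !mul0r addr0.
  have [qb0|qbn] := eqVneq (qbar z t) 0.
    by rewrite qb0 (qbar_eq0 pz qb0) !klr0 !(mulr0, mul0r) addr0.
  have qbp : 0 < qbar z t by rewrite lt_def qbn qbar_ge0.
  by rewrite (klr_split (q_ge0 z t) (chan_out_gt0_of_qbar pz qbp) qbp) mulrDr mulrA.
have lnE : \sum_z p z * q z t * ln (qbar z t / P t) = \sum_z p z * klr (qbar z t) (P t).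
  rewrite -sum_qbar_invariant => [|z z' pz zz']; last by rewrite (qbar_eq_class t pz zz').
  by apply: eq_bigr => z _; rewrite /klr mulrA.
have linE : \sum_z p z * (q z t - qbar z t) = 0.
  rewrite (eq_bigr (fun z => p z * q z t * 1 - p z * qbar z t * 1)) => [|z _].
    by rewrite sumrB sum_qbar_invariant // subrr.
  by rewrite !mulr1 mulrBr.
rewrite (eq_bigr _ (fun z _ => splitE z)) big_split /= lnE addrK.
rewrite [RHS](eq_bigr (fun z => p z * klr (q z t) (qbar z t) - p z * (q z t - qbar z t))).
  by rewrite sumrB linE subr0.
by move=> z _; rewrite mulrBr.
Qed.

Lemma mi_term_le t :
  \sum_z p z * klr (qbar z t) (P t) <= \sum_z p z * klr (q z t) (P t) /\
  (\sum_z p z * klr (qbar z t) (P t) = \sum_z p z * klr (q z t) (P t) ->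
     forall z, p z != 0 -> q z t = qbar z t).
Proof.
have kl z (pz : p z != 0) := sub_le_klr (q_ge0 z t) (qbar_ge0 z t) (qbar_eq0 pz).
have gap_ge0 z : 0 <= p z * (klr (q z t) (qbar z t) - (q z t - qbar z t)).
  have [->|pz] := eqVneq (p z) 0; first by rewrite mul0r.
  by rewrite mulr_ge0 ?p_ge0 // subr_ge0; case: (kl z pz).
split; first by rewrite -subr_ge0 mi_gapE sumr_ge0.
move=> eq z pz.
have gap0 : \sum_z p z * (klr (q z t) (qbar z t) - (q z t - qbar z t)) = 0.
  by rewrite -mi_gapE eq subrr.
apply: (kl z pz).2; apply/eqP; rewrite -subr_eq0; apply/eqP.
by apply: (mulfI pz); rewrite mulr0; apply: (psumr_eq0P (fun z _ => gap_ge0 z) gap0).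
Qed.

Lemma pospart_mi_qbar_le z t : pospart (p z * klr (qbar z t) (P t)) <= qbar z t.
Proof.
rewrite ge_max qbar_ge0 andbT.
have [->|pz] := eqVneq (p z) 0; first by rewrite mul0r qbar_ge0.
have [->|qbn] := eqVneq (qbar z t) 0; first by rewrite klr0 mulr0.
have qbp : 0 < qbar z t by rewrite lt_def qbn qbar_ge0.
have Pp := chan_out_gt0_of_qbar pz qbp.
have lnle : ln (qbar z t / P t) <= qbar z t / P t by rewrite ltW // ln_sublinear // divr_gt0.
apply: (le_trans (y := p z * (qbar z t * (qbar z t / P t)))).
  by rewrite ler_wpM2l ?p_ge0 // ler_wpM2l ?qbar_ge0.
rewrite mulrCA -[leRHS]mulr1 ler_wpM2l ?qbar_ge0 // mulrA ler_pdivrMr // mul1r.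
exact: p_qbar_le.
Qed.

Lemma MI_chanE (k : X * Y -> nat -> R) :
  (forall z t, chan_out k p t = 0 -> k z t * p z = 0) ->
  MI p k = (\sum_(t <oo) (\sum_z pospart (p z * klr (k z t) (chan_out k p t)))%:E -
            \sum_(t <oo) (\sum_z negpart (p z * klr (k z t) (chan_out k p t)))%:E)%E.
Proof.
move=> k0; rewrite /MI KLprodE => [|z t /eqP]; last first.
  by rewrite mulf_eq0 => /predU1P[->|/eqP/k0]; rewrite ?mul0r // mulrC.
by congr (_ - _)%E; apply: eq_eseriesr => t _; congr (_%:E); apply: eq_bigr => z _; rewrite klrM2l.
Qed.

Lemma negpart_pklr_le z (x o : R) : 0 <= x -> 0 <= o -> (o = 0 -> x * p z = 0) ->
  negpart (p z * klr x o) <= p z * o.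
Proof.
move=> x0 o0 ox; rewrite -klrM2l; apply: negpart_klr_le; rewrite ?mulr_ge0 ?p_ge0 //.
by move/eqP; rewrite mulf_eq0 => /predU1P[->|/eqP/ox]; rewrite ?mul0r // mulrC.
Qed.

Lemma sum_chan_out_p : (\sum_(t <oo) (P t)%:E = 1)%E.
Proof.
have e t : P t = \sum_z p z * q z t by apply: eq_bigr => z _; rewrite mulrC.
under eq_eseriesr do rewrite e.
by rewrite nneseries_mixture ?p_sum1 //; [exact: q_ge0 | exact: q_sum1 | exact: p_ge0].
Qed.

Lemma negpart_mi_fin (k : X * Y -> nat -> R) : (forall z t, 0 <= k z t) ->
  (forall z t, P t = 0 -> k z t * p z = 0) ->
  (\sum_(t <oo) (\sum_z negpart (p z * klr (k z t) (P t)))%:E < +oo)%E.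
Proof.
move=> k0 kP; have P0 t : 0 <= P t by apply: chan_out_ge0; exact: p_ge0.
have le_P t : \sum_z negpart (p z * klr (k z t) (P t)) <= P t.
  rewrite -[leRHS]mul1r -{1}p_sum1 mulr_suml; apply: ler_sum => z _.
  exact: negpart_pklr_le (k0 z t) (P0 t) (kP z t).
apply: nneseries_le_lt le_P _; last by rewrite sum_chan_out_p ltry.
by move=> t; rewrite sumr_ge0 // => *; exact: negpart_ge0.
Qed.

Lemma pospart_mi_qbar_fin :
  (\sum_(t <oo) (\sum_z pospart (p z * klr (qbar z t) (P t)))%:E < +oo)%E.
Proof.
have le_qbar t : \sum_z pospart (p z * klr (qbar z t) (P t)) <= \sum_z 1 * qbar z t.
  by apply: ler_sum => z _; rewrite mul1r pospart_mi_qbar_le.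
apply: nneseries_le_lt le_qbar _ => [t|].
  by rewrite sumr_ge0 // => *; exact: pospart_ge0.
by rewrite nneseries_mixture ?ltry // => *; [exact: qbar_ge0 | case: qbar_channel].
Qed.

Hypothesis q_optimal : forall k, is_channel k ->
  IIB_constraint p k = KLfin p m -> (MI p q <= MI p k)%E.

(* Summed over [t], [mi_term_le] says [MI p qbar <= MI p q]; optimality of [q]
   gives the converse, hence equality termwise. *)
Lemma mi_term_eq t :
  \sum_z p z * klr (qbar z t) (P t) = \sum_z p z * klr (q z t) (P t).
Proof.
pose a s := \sum_z pospart (p z * klr (q z s) (P s)).
pose b s := \sum_z negpart (p z * klr (q z s) (P s)).
pose c s := \sum_z pospart (p z * klr (qbar z s) (P s)).
pose d s := \sum_z negpart (p z * klr (qbar z s) (P s)).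
have qbarP z s : P s = 0 -> qbar z s * p z = 0.
  move=> P0; apply/eqP; rewrite eq_le mulr_ge0 ?qbar_ge0 ?p_ge0 // andbT.
  by rewrite mulrC -P0 p_qbar_le.
have qP z s : P s = 0 -> q z s * p z = 0 := chan_out_eq0 z p_ge0.
have bfin := negpart_mi_fin q_ge0 qP.
have dfin := negpart_mi_fin qbar_ge0 qbarP.
have abE s : a s - b s = \sum_z p z * klr (q z s) (P s).
  by rewrite -sumrB; apply: eq_bigr => z _; rewrite pospartB.
have cdE s : c s - d s = \sum_z p z * klr (qbar z s) (P s).
  by rewrite -sumrB; apply: eq_bigr => z _; rewrite pospartB.
have a0 s : 0 <= a s by rewrite sumr_ge0 // => *; exact: pospart_ge0.
have b0 s : 0 <= b s by rewrite sumr_ge0 // => *; exact: negpart_ge0.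
have c0 s : 0 <= c s by rewrite sumr_ge0 // => *; exact: pospart_ge0.
have d0 s : 0 <= d s by rewrite sumr_ge0 // => *; exact: negpart_ge0.
have le_t s : c s - d s <= a s - b s by rewrite abE cdE; case: (mi_term_le s).
have le_sum : (\sum_(s <oo) (a s)%:E - \sum_(s <oo) (b s)%:E <=
               \sum_(s <oo) (c s)%:E - \sum_(s <oo) (d s)%:E)%E.
  have out : chan_out qbar p = P by apply: funext => s; exact: chan_out_qbar.
  have MIq : MI p q = (\sum_(s <oo) (a s)%:E - \sum_(s <oo) (b s)%:E)%E.
    by rewrite MI_chanE.
  have MIqbar : MI p qbar = (\sum_(s <oo) (c s)%:E - \sum_(s <oo) (d s)%:E)%E.
    by rewrite MI_chanE out.
  rewrite -MIq -MIqbar; apply: q_optimal; first exact: qbar_channel.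
  by rewrite IIB_constraint_qbar.
have cfin := pospart_mi_qbar_fin.
by rewrite -abE -cdE (termwise_eq_of_nneseriesB_le a0 b0 c0 d0 le_t bfin cfin dfin le_sum).
Qed.

Lemma q_eq_qbar z t : p z != 0 -> q z t = qbar z t.
Proof. exact: (mi_term_le t).2 (mi_term_eq t) z. Qed.

Lemma q_eq0 z t : ~~ (0 < q z t) -> q z t = 0.
Proof. by rewrite lt_def q_ge0 andbT negbK => /eqP. Qed.

Lemma qT_indic_Tq z t : qT p q t * \1_(Tq q (eq_class p z)) t = cjoint z t.
Proof.
rewrite indicE; case: (boolP (t \in _)) => [/set_mem[z1 z1C qz1]|notT] /=.
  rewrite mulr1 /qT /cjoint [RHS]big_mkcond; apply: eq_bigr => z' _.
  case: ifPn => // z'C; have -> : q z' t = 0; last by rewrite mulr0.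
  apply: q_eq0; apply/negP => qz'; move/negP: z'C; apply.
  by rewrite -(eq_class_eq z1C) (common_output_eq_class qz1 qz').
rewrite mulr0 /cjoint big1 // => z' z'C.
have -> : q z' t = 0; last by rewrite mulr0.
by apply: q_eq0; apply/negP => qz'; move/negP: notT; apply; apply: mem_set; exists z'.
Qed.

Lemma qmass_Tq z : qmass p q (Tq q (eq_class p z)) = cmass z.
Proof.
rewrite /qmass; under eq_eseriesr do rewrite qT_indic_Tq.
have e t : cjoint z t = \sum_z' ((z' \in eq_class p z)%:R * p z') * q z' t.
  by rewrite /cjoint big_mkcond; apply: eq_bigr => z' _; case: ifP; rewrite ?mul1r ?mul0r.
under eq_eseriesr do rewrite e.
rewrite nneseries_mixture /= ?sum_eq_class // => *; first exact: q_ge0.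
  exact: q_sum1.
by rewrite mulr_ge0 ?ler0n ?p_ge0.
Qed.

Lemma qcond_Tq z t : p z != 0 -> qcond p q (Tq q (eq_class p z)) t = qbar z t.
Proof. by move=> pz; rewrite /qcond mulrAC qT_indic_Tq qmass_Tq /qbar (negPf pz). Qed.

Lemma eq_class_in_S z : p z != 0 -> eq_class p z \in classes_in_S p.
Proof.
move=> pz; rewrite inE; apply/andP; split; first by apply: mem_set; exists z.
by apply/fintype.subsetP => z' /(eq_class_supp pz); rewrite inE.
Qed.

Lemma sum_classes_in_S z (F : {set X * Y} -> R) : p z != 0 ->
  \sum_(C in classes_in_S p) F C * (z \in C)%:R = F (eq_class p z).
Proof.
move=> pz; rewrite (bigD1 (eq_class p z)) ?eq_class_in_S //= eq_class_refl mulr1.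
rewrite big1 ?addr0 // => C /andP[]; rewrite inE => /andP[/set_mem[z0 _ <-] _] neq.
case: (boolP (z \in eq_class p z0)) => [zC|]; last by rewrite mulr0.
by move: neq; rewrite (eq_class_eq zC) eqxx.
Qed.
End IIB.

Unset Implicit Arguments.
Set Strict Implicit.

Theorem lemma13 (R : realType) (X Y : finType) (p : X * Y -> R)
  (q : X * Y -> nat -> R) :
  is_distr p ->
  (forall x, 0 < margX p x) -> (forall y, 0 < margY p y) ->
  IIB_solution p (KLfin p (prodmarg p)) q ->
  forall z, z \in supp p -> forall t : nat,
    q z t = \sum_(C in classes_in_S p) qcond p q (Tq q C) t * (z \in C)%:R.
Proof.
move=> p_distr margX_gt0 margY_gt0 [q_chan q_constraint q_optimal] z zS t.
have pz : p z != 0 by rewrite inE in zS.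
rewrite (sum_classes_in_S margX_gt0 margY_gt0 (fun C => qcond p q (Tq q C) t) pz).
rewrite (qcond_Tq p_distr margX_gt0 margY_gt0 q_chan q_constraint t pz).
exact: (q_eq_qbar p_distr margX_gt0 margY_gt0 q_chan q_constraint q_optimal t pz).
Qed.
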